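(* Let $f=f(n)\ge0$ with $f\to\infty$ and let $\alpha>0$ be a constant. There exist constants $\zeta>0$ and $C>0$ such that, for all sufficiently large $n$ and every $f/n\le p\le1$, with probability at least $1-Ce^{-(pn)^2}$ the following holds in $\mathcal G(n,p)$: for every $s\le\zeta n$ and every set $S\subseteq[n]$ of size $s$, $|E[S]|\le\alpha pns$.
   Context: $\mathcal G(n,p)$ is the Erdős–Rényi random graph on $[n]$ with edge probability $p$; $E[S]$ is the set of edges with both ends in $S$. *)

From mathcomp Require Import all_boot all_order all_algebra.
From mathcomp Require Import all_classical all_reals all_analysis.
Set Implicit Arguments. Unset Strict Implicit. Unset Printing Implicit Defensive.
Import Order.TTheory GRing.Theory Num.Theory.
Local Open Scope ring_scope.

(* Vertex set [n] is 'I_n.  A simple graph on [n] is an edge set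
   E \subset pairs n, where an edge {i,j} (i < j) is encoded as the pair (i,j). *)
Definition pairs (n : nat) : {set 'I_n * 'I_n} := [set e : 'I_n * 'I_n | (val e.1 < val e.2)%N].

(* Probability of the event A in G(n,p): each of the (n choose 2) possible
   edges is present independently with probability p. *)
Definition gnp_prob (R : realType) (n : nat) (p : R)
    (A : pred {set 'I_n * 'I_n}) : R :=
  \sum_(E in powerset (pairs n) | A E)
     p ^+ #|E| * (1 - p) ^+ (#|pairs n| - #|E|).

Definition edges_in (n : nat) (E : {set 'I_n * 'I_n}) (S : {set 'I_n})
  : {set 'I_n * 'I_n} :=
  [set e in E | (e.1 \in S) && (e.2 \in S)].

Definition locally_sparse (R : realType) (n : nat) (p zeta alpha : R)
    (E : {set 'I_n * 'I_n}) : bool :=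
  [forall S : {set 'I_n},
     (#|S|%:R <= zeta * n%:R) ==>
     (#|edges_in E S|%:R <= alpha * p * n%:R * #|S|%:R)].

From mathcomp Require Import all_boot all_order all_algebra.
From mathcomp Require Import all_classical all_reals all_analysis.
From mathcomp Require Import ring lra.
Import Order.TTheory GRing.Theory Num.Theory.
Local Open Scope ring_scope.
Set Implicit Arguments. Unset Strict Implicit. Unset Printing Implicit Defensive.

(* First moment method.  Put c = alpha p n and t = floor c.  If a set S of size
   s spans more than c s edges, then E contains one of the C(e(S), k) sets of
   k = floor(c s) + 1 pairs inside S, each present with probability p^k.  For
   s <= t this is impossible, since e(S) <= s^2 <= c s < k.  For s > t, the
   C(n, s) sets of size s contribute at most
   (e n / s)^s (e s / (alpha n))^(t s) <= q^s, where q = e^2/alpha exp(-L)^(t-1)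
   as soon as s <= zeta n = alpha exp(-L) n / e.  Summing over s > t gives
   2 (2q)^t, and since t is of order alpha p n and L is a large constant,
   (2q)^t <= exp(-(pn)^2). *)

Lemma sum_set_card (V : nmodType) n (G : nat -> V) :
  \sum_(S : {set 'I_n}) G #|S| = \sum_(s < n.+1) G s *+ 'C(n, s).
Proof.
rewrite (partition_big (fun S : {set 'I_n} => inord #|S| : 'I_n.+1) xpredT) //=.
apply: eq_bigr => s _.
have -> : 'C(n, s) = #|[set S : {set 'I_n} | #|S| == s]| by rewrite card_draws card_ord.
rewrite -sumr_const.
have Sn (S : {set 'I_n}) : (#|S| <= n)%N by rewrite -[X in (_ <= X)%N]card_ord max_card.
apply: eq_big => [S|S]; last by move/eqP <-; rewrite inordK // ltnS.
rewrite inE; apply/eqP/eqP => [<-|Ss]; first by rewrite inordK // ltnS.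
by apply: val_inj; rewrite /= inordK // ltnS.
Qed.

Lemma ffact_leq_expn m k : (m ^_ k <= m ^ k)%N.
Proof.
elim: k => [|k IHk]; first by rewrite ffactn0 expn0.
by rewrite ffactnSr expnSr leq_mul // leq_subr.
Qed.

Lemma bin_le_expR (R : realType) m k :
  'C(m, k)%:R <= (expR 1 * m%:R / k%:R) ^+ k :> R.
Proof.
case: k => [|k]; first by rewrite bin0 expr0.
have k0 : 0 < k.+1%:R :> R by rewrite ltr0n.
have fact0 : 0 < k.+1`!%:R :> R by rewrite ltr0n fact_gt0.
have bin_ffact_le : 'C(m, k.+1)%:R <= m%:R ^+ k.+1 / k.+1`!%:R :> R.
  by rewrite ler_pdivlMr // -natrM bin_ffact -natrX ler_nat ffact_leq_expn.
(* [k^k / k! <= e^k], from one term of the exponential series *)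
have pow_le_fact : k.+1%:R ^+ k.+1 <= expR 1 ^+ k.+1 * k.+1`!%:R :> R.
  rewrite -ler_pdivrMr // -expRM_natl mulr1.
  by apply: le_trans (expR_ge1Dxn k (ler0n _ _)); rewrite lerDr.
apply: (le_trans bin_ffact_le).
rewrite expr_div_n exprMn ler_pdivlMr ?exprn_gt0 // mulrAC ler_pdivrMr //.
apply: (le_trans (ler_wpM2l _ pow_le_fact)); first by rewrite exprn_ge0 // ler0n.
by rewrite mulrA [_ * expR 1 ^+ _]mulrC.
Qed.

Lemma sum_expr_half_le2 (R : realType) N : \sum_(s < N) (2^-1 : R) ^+ s <= 2.
Proof.
have half_gt0 : 0 < 2^-1 :> R by rewrite invr_gt0.
have := geometric_le_lim N ler01 half_gt0.
rewrite gtr0_norm // invf_lt1 ?ltr1n // => /(_ isT).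
rewrite /series /geometric /= big_mkord.
have -> : 1 / (1 - 2^-1) = 2 :> R by field.
by move=> sum_le; apply: (le_trans _ sum_le); apply: ler_sum => i _; rewrite mul1r.
Qed.

Lemma sum_tail_expr_le (R : realType) (q : R) (t N : nat) : 0 <= q -> 2 * q <= 1 ->
  \sum_(s < N | (t <= s)%N) q ^+ s <= 2 * (2 * q) ^+ t.
Proof.
move=> q0 q_le; have q2_ge0 : 0 <= 2 * q by rewrite mulr_ge0.
apply: (@le_trans _ _ (\sum_(s < N | (t <= s)%N) (2 * q) ^+ t * 2^-1 ^+ s)).
  apply: ler_sum => s ts.
  have -> : q ^+ s = (2 * q) ^+ s * 2^-1 ^+ s by rewrite -exprMn; congr (_ ^+ _); field.
  rewrite ler_wpM2r ?exprn_ge0 ?invr_ge0 //.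
  exact: ler_wiXn2l.
rewrite -mulr_sumr mulrC ler_wpM2r ?exprn_ge0 //.
apply: le_trans (sum_expr_half_le2 R N).
rewrite [X in _ <= X](bigID (fun s : 'I_N => (t <= s)%N)) /= lerDl.
by apply: sumr_ge0 => s _; rewrite exprn_ge0 ?invr_ge0.
Qed.

Lemma bin_mul_expr_le (R : realType) (n s t : nat) (alpha r : R) :
  0 < alpha -> (0 < s)%N -> (0 < n)%N -> (0 < t)%N ->
  expR 1 * s%:R / (alpha * n%:R) <= r ->
  'C(n, s)%:R * (expR 1 * s%:R / (alpha * n%:R)) ^+ (t * s)
    <= (expR 1 ^+ 2 / alpha * r ^+ t.-1) ^+ s.
Proof.
case: t => // t a0 s0 n0 _; set y := _ / _ => yr.
have n0R : 0 < n%:R :> R by rewrite ltr0n.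
have s0R : 0 < s%:R :> R by rewrite ltr0n.
have y0 : 0 <= y by rewrite /y divr_ge0 ?mulr_ge0 ?expR_ge0 ?ltW.
have r0 : 0 <= r := le_trans y0 yr.
have e2a0 : 0 <= expR 1 ^+ 2 / alpha by rewrite divr_ge0 ?exprn_ge0 ?expR_ge0 ?ltW.
rewrite exprM; apply: le_trans (ler_wpM2r _ (bin_le_expR R n s)) _.
  by rewrite !exprn_ge0.
rewrite -exprMn; apply: lerXn2r.
- by rewrite nnegrE !mulr_ge0 ?exprn_ge0 ?invr_ge0 ?expR_ge0 ?ler0n.
- by rewrite nnegrE mulr_ge0 ?exprn_ge0.
rewrite exprS mulrA /=.
have -> : expR 1 * n%:R / s%:R * y = expR 1 ^+ 2 / alpha.
  by rewrite /y; field; rewrite !gt_eqF.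
by rewrite ler_wpM2l // lerXn2r ?nnegrE.
Qed.

Lemma le_mul_expR (R : realType) (B y : R) : B * expR y <= expR (B + y).
Proof.
rewrite expRD ler_wpM2r ?expR_ge0 //.
by apply: le_trans (expR_ge1Dx B); rewrite lerDr.
Qed.

Lemma expR_decay_le (R : realType) (B M x : R) (t : nat) :
  0 <= B -> 0 <= M -> (2 <= t)%N -> x ^+ 2 <= M * (t%:R + 1) ^+ 2 ->
  B * expR (- (B + 5 * M)) ^+ t.-1 <= 1 /\
  (B * expR (- (B + 5 * M)) ^+ t.-1) ^+ t <= expR (- x ^+ 2).
Proof.
move=> B0 M0 t2 xM; set L := B + 5 * M.
have t_pred : t.-1%:R = t%:R - 1 :> R.
  by rewrite -{2}(prednK (leq_trans _ t2)) // -natr1 addrK.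
have T2 : 2 <= t%:R :> R by rewrite (ler_nat R 2).
have decay_le : B * expR (- L) ^+ t.-1 <= expR (B - (t%:R - 1) * L).
  by rewrite -expRM_natl t_pred mulrN; apply: le_mul_expR.
have D0 : B - (t%:R - 1) * L <= 0 by rewrite /L; nra.
split; first by apply: le_trans decay_le _; rewrite expR_le1.
have base0 : 0 <= B * expR (- L) ^+ t.-1 by rewrite mulr_ge0 ?exprn_ge0 ?expR_ge0.
apply: le_trans (lerXn2r t _ _ decay_le) _; rewrite ?nnegrE ?expR_ge0 //.
rewrite -expRM_natl ler_expR /L.
have B_term : 0 <= B * (t%:R * (t%:R - 2)) by rewrite mulr_ge0 // mulr_ge0; lra.
(* [5 t (t - 1) >= (t + 1)^2] for [t >= 2]: where the constant 5 comes from *)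
have M_term : 0 <= M * (4 * t%:R ^+ 2 - 7 * t%:R - 1) by rewrite mulr_ge0 //; nra.
nra.
Qed.

Section BernoulliMass.
Variables (R : realType) (T : finType).

Lemma sum_set_prod (g : T -> bool -> R) :
  \sum_(E : {set T}) \prod_e g e (e \in E) = \prod_e (g e true + g e false).
Proof.
under [RHS]eq_bigr do rewrite -big_bool.
rewrite bigA_distr_bigA /= (reindex (fun E : {set T} => [ffun e => e \in E])) /=.
  by apply: eq_bigr => E _; apply: eq_bigr => e _; rewrite ffunE.
exists (fun f : {ffun T -> bool} => [set e | f e]) => [E _|f _].
  by apply/setP => e; rewrite inE ffunE.
by apply/ffunP => e; rewrite ffunE inE.
Qed.

Variables (U : {set T}) (p : R).

(* Elements outside [U] are present with probability 0, so that a sum over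
   all of [{set T}] is a sum over the subsets of [U]. *)
Definition bern_weight (e : T) (b : bool) : R :=
  if e \in U then (if b then p else 1 - p) else (~~ b)%:R.

Definition bern_mass (E : {set T}) : R := \prod_e bern_weight e (e \in E).

Lemma bern_weight_sum e : bern_weight e true + bern_weight e false = 1.
Proof. by rewrite /bern_weight; case: (e \in U); rewrite ?subrKC ?add0r. Qed.

Lemma sum_bern_mass : \sum_E bern_mass E = 1.
Proof. by rewrite sum_set_prod big1 // => e _; apply: bern_weight_sum. Qed.

Lemma bern_mass_ge0 (E : {set T}) : 0 <= p <= 1 -> 0 <= bern_mass E.
Proof.
case/andP=> p0 p1; apply: prodr_ge0 => e _; rewrite /bern_weight.
by case: (e \in U); case: (e \in E); rewrite ?subr_ge0.
Qed.

Lemma bern_mass_out (E : {set T}) : ~~ (E \subset U) -> bern_mass E = 0.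
Proof.
by case/subsetPn=> e eE eU; rewrite /bern_mass (bigD1 e) //= /bern_weight (negbTE eU) eE mul0r.
Qed.

Lemma bern_massE (E : {set T}) : E \subset U ->
  bern_mass E = p ^+ #|E| * (1 - p) ^+ (#|U| - #|E|).
Proof.
move=> EU; rewrite /bern_mass (bigID (fun e => e \in U)) /= [X in _ * X]big1 ?mulr1; last first.
  move=> e /negbTE eU; rewrite /bern_weight eU.
  by case eE: (e \in E) => //; move: eU; rewrite (fintype.subsetP EU e eE).
rewrite (bigID (fun e => e \in E)) /=; congr (_ * _).
  rewrite -prodr_const; apply: eq_big => [e|e /andP[eU ->]]; last by rewrite /bern_weight eU.
  by rewrite andb_idl // => /(fintype.subsetP EU).
have -> : (#|U| - #|E|)%N = #|U :\: E| by rewrite cardsD (finset.setIidPr EU).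
rewrite -prodr_const.
apply: eq_big => [e|e /andP[eU /negbTE eE]]; last by rewrite /bern_weight eU eE.
by rewrite inE andbC.
Qed.

Lemma sum_bern_mass_superset (F : {set T}) : F \subset U ->
  \sum_(E : {set T} | F \subset E) bern_mass E = p ^+ #|F|.
Proof.
move=> FU; pose g e b := bern_weight e b * (if e \in F then b%:R else 1).
have gE (E : {set T}) : \prod_e g e (e \in E) = bern_mass E * (F \subset E)%:R.
  rewrite big_split /=; congr (_ * _); case: (boolP (F \subset E)) => FE.
    by apply: big1 => e _; case: ifP => // eF; rewrite (fintype.subsetP FE).
  by case/subsetPn: FE => e eF eE; rewrite (bigD1 e) //= eF (negbTE eE) mul0r.
transitivity (\sum_(E : {set T}) \prod_e g e (e \in E)).
  rewrite big_mkcond; apply: eq_bigr => E _.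
  by rewrite gE; case: (F \subset E); rewrite ?mulr1 ?mulr0.
rewrite sum_set_prod (bigID (fun e => e \in F)) /= [X in _ * X]big1 ?mulr1; last first.
  by move=> e /negbTE eF; rewrite /g eF !mulr1 bern_weight_sum.
rewrite -prodr_const; apply: eq_bigr => e eF.
by rewrite /g eF /bern_weight (fintype.subsetP FU) // mulr1 mulr0 addr0.
Qed.

Lemma sum_bern_mass_le_mean (A : pred {set T}) (X : {set T} -> R) :
  0 <= p <= 1 -> (forall E, 0 <= X E) ->
  (forall E : {set T}, E \subset U -> A E -> 1 <= X E) ->
  \sum_(E | A E) bern_mass E <= \sum_(E : {set T}) bern_mass E * X E.
Proof.
move=> p01 X0 AX; rewrite [X in _ <= X](bigID A) /= -[X in X <= _]addr0.
apply: lerD; last by apply: sumr_ge0 => E _; rewrite mulr_ge0 ?bern_mass_ge0.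
apply: ler_sum => E AE; case: (boolP (E \subset U)) => EU.
  by rewrite ler_peMr ?bern_mass_ge0 ?AX.
by rewrite bern_mass_out ?mul0r.
Qed.

Definition ksubset_count (D : {set T}) (k : nat) (E : {set T}) : R :=
  \sum_(F : {set T} | (F \subset D) && (#|F| == k)) (F \subset E)%:R.

Lemma ksubset_count_ge0 (D : {set T}) k (E : {set T}) : 0 <= ksubset_count D k E.
Proof. exact: sumr_ge0. Qed.

Lemma ksubset_count_ge1 (D : {set T}) k (E : {set T}) :
  (k <= #|D :&: E|)%N -> 1 <= ksubset_count D k E.
Proof.
move=> kDE; have : (0 < #|[set F : {set T} | F \subset D :&: E & #|F| == k]|)%N.
  by rewrite cards_draws bin_gt0.
rewrite card_gt0 => /set0Pn[F]; rewrite inE finset.subsetI -andbA => /and3P[FD FE Fk].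
rewrite /ksubset_count (bigD1 F) ?FD ?Fk //= FE lerDl.
exact: sumr_ge0.
Qed.

Lemma sum_bern_mass_ksubset_count (D : {set T}) k : D \subset U ->
  \sum_(E : {set T}) bern_mass E * ksubset_count D k E = 'C(#|D|, k)%:R * p ^+ k.
Proof.
move=> DU; under eq_bigr do rewrite mulr_sumr; rewrite exchange_big /=.
rewrite -cards_draws mulr_natl -sumr_const.
apply: eq_big => [F|F /andP[FD /eqP <-]]; first by rewrite inE.
rewrite -(@sum_bern_mass_superset _ (fintype.subset_trans FD DU)) [RHS]big_mkcond /=.
by apply: eq_bigr => E _; case: (F \subset E); rewrite ?mulr1 ?mulr0.
Qed.

End BernoulliMass.

Arguments ksubset_count {R T} D k E.

Lemma gnp_probE (R : realType) n (p : R) (A : pred {set 'I_n * 'I_n}) :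
  gnp_prob p A = 1 - \sum_(E | ~~ A E) bern_mass (pairs n) p E.
Proof.
rewrite -(sum_bern_mass (pairs n) p) (bigID A) /= addrK /gnp_prob.
rewrite [RHS](bigID (fun E : {set _} => E \subset pairs n)) /=.
rewrite [X in _ = _ + X]big1 ?addr0; last first.
  by move=> E /andP[_ /bern_mass_out].
apply: eq_big => [E|E]; first by rewrite powersetE andbC.
by rewrite powersetE => /andP[/bern_massE ->].
Qed.

(* The least size of an edge set violating [|E[S]| <= c * s] for [|S| = s]. *)
Definition overfull_size (R : realType) (c : R) (s : nat) : nat := (Num.truncn (c * s%:R)).+1.

Lemma sum_not_sparse_le (R : realType) n (p zeta alpha : R) :
  0 <= p <= 1 -> 0 <= alpha ->
  \sum_(E | ~~ locally_sparse p zeta alpha E) bern_mass (pairs n) p E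
   <= \sum_(S : {set 'I_n} | #|S|%:R <= zeta * n%:R)
        'C(#|edges_in (pairs n) S|, overfull_size (alpha * p * n%:R) #|S|)%:R
          * p ^+ overfull_size (alpha * p * n%:R) #|S|.
Proof.
move=> p01 a0; set k := overfull_size _; have /andP[p0 _] := p01.
pose X (E : {set 'I_n * 'I_n}) : R := \sum_(S : {set 'I_n} | #|S|%:R <= zeta * n%:R)
  ksubset_count (edges_in (pairs n) S) (k #|S|) E.
apply: (le_trans (sum_bern_mass_le_mean (U := pairs n) (X := X) p01 _ _)).
- by move=> E; apply: sumr_ge0 => S _; apply: ksubset_count_ge0.
- move=> E Epairs /forallPn[S]; rewrite negb_imply => /andP[Sz Sdense].
  rewrite /X (bigD1 S) //= -[1]addr0; apply: lerD; last first.
    by apply: sumr_ge0 => S' _; apply: ksubset_count_ge0.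
  apply: ksubset_count_ge1; apply: (@leq_trans #|edges_in E S|).
    by rewrite /k /overfull_size truncn_lt_nat ?ltNge // !mulr_ge0.
  apply: subset_leq_card; apply/fintype.subsetP => e; rewrite inE => /andP[eE eS].
  by rewrite finset.in_setI eE andbT inE (fintype.subsetP Epairs e eE).
rewrite /X; under eq_bigr do rewrite mulr_sumr; rewrite exchange_big /=.
apply: ler_sum => S _; rewrite sum_bern_mass_ksubset_count //.
by apply/fintype.subsetP => e; rewrite inE => /andP[].
Qed.

Lemma edges_in_card_le n (S : {set 'I_n}) : (#|edges_in (pairs n) S| <= #|S| * #|S|)%N.
Proof.
rewrite -cardsX; apply: subset_leq_card; apply/fintype.subsetP => -[i j].
by rewrite !inE /= => /andP[_ /andP[-> ->]].
Qed.

Lemma bin_edges_in_eq0 (R : realType) n (S : {set 'I_n}) (c : R) k :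
  #|S|%:R <= c -> c * #|S|%:R < k%:R -> 'C(#|edges_in (pairs n) S|, k) = 0.
Proof.
move=> Sc ck; rewrite bin_small // (leq_ltn_trans (edges_in_card_le S)) // -(ltr_nat R) natrM.
by apply: le_lt_trans ck; rewrite ler_wpM2r ?ler0n.
Qed.

Lemma bin_edges_in_le (R : realType) n (S : {set 'I_n}) (c p : R) k :
  0 < c -> 0 <= p -> c * #|S|%:R < k%:R ->
  'C(#|edges_in (pairs n) S|, k)%:R * p ^+ k <= (expR 1 * #|S|%:R * p / c) ^+ k.
Proof.
move=> c0 p0 ck; have k0 : 0 < k%:R :> R.
  by apply: le_lt_trans ck; rewrite mulr_ge0 ?ler0n ?ltW.
set m := #|edges_in _ _|; set s := #|S|.
have ms : m%:R <= s%:R * s%:R :> R by rewrite -natrM ler_nat edges_in_card_le.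
have mk_le : m%:R / k%:R <= s%:R / c.
  rewrite ler_pdivrMr // mulrAC ler_pdivlMr //.
  apply: (le_trans (ler_wpM2r (ltW c0) ms)); rewrite -mulrA ler_wpM2l ?ler0n //.
  by rewrite mulrC ltW.
apply: le_trans (ler_wpM2r (exprn_ge0 _ p0) (bin_le_expR _ _ _)) _.
rewrite -exprMn; apply: lerXn2r.
- by rewrite nnegrE !mulr_ge0 ?divr_ge0 ?expR_ge0 ?ler0n.
- by rewrite nnegrE divr_ge0 ?mulr_ge0 ?expR_ge0 ?ler0n // ltW.
have -> : expR 1 * m%:R / k%:R * p = expR 1 * p * (m%:R / k%:R) by ring.
have -> : expR 1 * s%:R * p / c = expR 1 * p * (s%:R / c) by ring.
by rewrite ler_wpM2l ?mulr_ge0 ?expR_ge0.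
Qed.

Lemma bin_edges_in_le_if (R : realType) n t (S : {set 'I_n}) (p alpha r : R) k :
  0 < alpha -> 0 < p -> (0 < n)%N -> t%:R <= alpha * p * n%:R ->
  alpha * p * n%:R * #|S|%:R < k%:R ->
  expR 1 * #|S|%:R / (alpha * n%:R) <= r -> r <= 1 ->
  'C(#|edges_in (pairs n) S|, k)%:R * p ^+ k
    <= if (t < #|S|)%N then (expR 1 * #|S|%:R / (alpha * n%:R)) ^+ (t * #|S|) else 0.
Proof.
move=> a0 p0 n0 t_le k_gt yr r1; have n0R : 0 < n%:R :> R by rewrite ltr0n.
have c0 : 0 < alpha * p * n%:R by rewrite !mulr_gt0.
case: ltnP => [ts|st]; last first.
  rewrite (bin_edges_in_eq0 _ k_gt) ?mul0r //.
  by apply: le_trans t_le; rewrite ler_nat.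
apply: le_trans (bin_edges_in_le c0 (ltW p0) k_gt) _.
have -> : expR 1 * #|S|%:R * p / (alpha * p * n%:R) = expR 1 * #|S|%:R / (alpha * n%:R).
  by field; rewrite !gt_eqF.
apply: ler_wiXn2l; first by rewrite divr_ge0 ?mulr_ge0 ?expR_ge0 ?ler0n ?ltW.
  exact: le_trans yr r1.
rewrite -(ler_nat R) natrM ltW //.
by apply: le_lt_trans k_gt; rewrite ler_wpM2r ?ler0n.
Qed.

Lemma sum_not_sparse_le_pow (R : realType) n t (p alpha L : R) :
  0 < alpha -> 0 < p -> p <= 1 -> (0 < n)%N -> (0 < t)%N -> 0 <= L ->
  t%:R <= alpha * p * n%:R ->
  let q := expR 1 ^+ 2 / alpha * expR (- L) ^+ t.-1 in 2 * q <= 1 ->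
  \sum_(E | ~~ locally_sparse p (alpha * expR (- L) / expR 1) alpha E) bern_mass (pairs n) p E
    <= 2 * (2 * q) ^+ t.
Proof.
move=> a0 p0 p1 n0 t0 L0 t_le q q_le; set zeta := _ / expR 1.
have n0R : 0 < n%:R :> R by rewrite ltr0n.
have q0 : 0 <= q by rewrite mulr_ge0 ?exprn_ge0 ?divr_ge0 ?expR_ge0 ?ltW.
pose y s : R := expR 1 * s%:R / (alpha * n%:R).
have y_le s : s%:R <= zeta * n%:R -> y s <= expR (- L).
  move=> sz; rewrite /y ler_pdivrMr ?mulr_gt0 //.
  apply: le_trans (ler_wpM2l (expR_ge0 1) sz) _.
  have -> : expR 1 * (zeta * n%:R) = expR (- L) * (alpha * n%:R).
    by rewrite /zeta; field; rewrite gt_eqF ?expR_gt0.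
  exact: lexx.
pose g s : R := if (t < s)%N && (s%:R <= zeta * n%:R) then y s ^+ (t * s) else 0.
have y0 s : 0 <= y s by rewrite /y divr_ge0 ?mulr_ge0 ?expR_ge0 ?ler0n ?ltW.
have g0 s : 0 <= g s by rewrite /g; case: ifP => _; rewrite ?exprn_ge0 ?lexx.
have p01 : 0 <= p <= 1 by rewrite (ltW p0) p1.
apply: le_trans (sum_not_sparse_le n zeta p01 (ltW a0)) _.
apply: (@le_trans _ _ (\sum_(S : {set 'I_n}) g #|S|)).
  rewrite big_mkcond; apply: ler_sum => S _; case: ifP => Sz; last exact: g0.
  have k_gt := truncnS_gt (alpha * p * n%:R * #|S|%:R).
  apply: le_trans (bin_edges_in_le_if a0 p0 n0 t_le k_gt (y_le _ Sz) _) _.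
    by rewrite expR_le1 oppr_le0.
  by rewrite /g Sz andbT; case: ifP.
rewrite sum_set_card; apply: (le_trans _ (sum_tail_expr_le t n.+1 q0 q_le)).
rewrite [X in X <= _](bigID (fun s : 'I_n.+1 => (t <= s)%N)) /=.
rewrite [X in _ + X]big1 ?addr0; last first.
  move=> s; rewrite -ltnNge => st; rewrite /g ifF ?mul0rn //.
  by apply/negbTE; rewrite negb_and -leqNgt (ltnW st).
apply: ler_sum => s ts; rewrite /g; case: ifP => [/andP[st sz] | _]; last first.
  by rewrite mul0rn exprn_ge0.
rewrite -mulr_natl; apply: bin_mul_expr_le => //; first exact: leq_ltn_trans st.
exact: y_le.
Qed.

Theorem lemma4p14 (R : realType) (f : nat -> R)
  (f_ge0 : forall n, 0 <= f n)
  (f_infty : forall M : R, exists N : nat, forall n, (N <= n)%N -> M <= f n)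
  (alpha : R) (alpha_gt0 : 0 < alpha) :
  exists zeta : R, exists C : R, 0 < zeta /\ 0 < C /\
    exists N : nat, forall n : nat, (N <= n)%N ->
      forall p : R, f n / n%:R <= p -> p <= 1 ->
        1 - C * expR (- (p * n%:R) ^+ 2)
          <= @gnp_prob R n p (@locally_sparse R n p zeta alpha).
Proof.
pose B : R := 2 * expR 1 ^+ 2 / alpha; pose M : R := alpha ^- 2; pose L := B + 5 * M.
have B0 : 0 <= B by rewrite divr_ge0 ?mulr_ge0 ?exprn_ge0 ?expR_ge0 ?ltW.
have M0 : 0 <= M by rewrite invr_ge0 exprn_ge0 ?ltW.
exists (alpha * expR (- L) / expR 1), 2; split; first by rewrite divr_gt0 ?mulr_gt0 ?expR_gt0.
split=> //; have [N fN] := f_infty (2 / alpha); exists (maxn N 1) => n n_ge p fp p1.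
have n0 : (0 < n)%N by rewrite (leq_trans _ n_ge) // leq_maxr.
have fn_ge : 2 / alpha <= f n by apply: fN; rewrite (leq_trans _ n_ge) // leq_maxl.
have fn_le : f n <= p * n%:R by rewrite -ler_pdivrMr ?ltr0n.
have pn_ge : 2 <= alpha * (p * n%:R).
  by rewrite -ler_pdivrMl // mulrC (le_trans fn_ge).
have p0 : 0 < p.
  have : 0 < p * n%:R by apply: lt_le_trans fn_le; apply: lt_le_trans fn_ge; rewrite divr_gt0.
  by rewrite pmulr_lgt0 ?ltr0n.
set t := Num.truncn (alpha * p * n%:R).
have t2 : (2 <= t)%N by rewrite truncn_ge_nat -?mulrA // (le_trans _ pn_ge).
have t_le : t%:R <= alpha * p * n%:R by rewrite truncn_le -mulrA (le_trans _ pn_ge).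
have pnM : (p * n%:R) ^+ 2 <= M * (t%:R + 1) ^+ 2.
  have -> : (p * n%:R) ^+ 2 = M * (alpha * (p * n%:R)) ^+ 2.
    by rewrite /M; field; rewrite gt_eqF.
  rewrite ler_wpM2l // lerXn2r ?nnegrE ?addr_ge0 ?ler0n ?(le_trans _ pn_ge) //.
  by rewrite mulrA natr1 ltW // truncnS_gt.
have [q_le decay] := expR_decay_le B0 M0 t2 pnM.
have L0 : 0 <= L := addr_ge0 B0 (mulr_ge0 (ler0n _ 5) M0).
have two_q : 2 * (expR 1 ^+ 2 / alpha * expR (- L) ^+ t.-1) = B * expR (- L) ^+ t.-1.
  by rewrite /B !mulrA.
have := sum_not_sparse_le_pow alpha_gt0 p0 p1 n0 (ltnW t2) L0 t_le.
rewrite /= two_q => /(_ q_le) tail.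
by rewrite gnp_probE lerD2l lerN2; apply: le_trans tail _; rewrite ler_wpM2l.
Qed.
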